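(* Let $T_1\in\mathcal L(\mathcal H_1)$ and $T_2\in\mathcal L(\mathcal H_2)$ be invertible, and let $T\in\mathcal L(\mathcal H_1\oplus\mathcal H_2)$ have the block form $T=\begin{pmatrix}T_1&\ast\\0&T_2\end{pmatrix}$. Then for every $n\geq0$, $$\|T^{-n}\|\leq\max(1,\|T_1^{-n}\|)\cdot\max(1,\|T_2^{-n}\|)\cdot\bigl(\max(2,2\|T^n\|^2+1)\bigr)^{1/2}.$$
   Context: $\ast$ denotes an arbitrary bounded operator from $\mathcal H_2$ to $\mathcal H_1$; under these assumptions $T$ is invertible. *)

From HB Require Import structures.
From mathcomp Require Import all_boot all_order all_algebra.
From mathcomp Require Import complex.
From mathcomp Require Import classical_sets reals.
Set Implicit Arguments. Unset Strict Implicit. Unset Printing Implicit Defensive.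
Import Order.TTheory GRing.Theory Num.Theory.
Local Open Scope ring_scope.
Local Open Scope classical_set_scope.

Record Hilbert (R : realType) := HilbertSpace {
  hcar :> lmodType (complex R);
  hinner : hcar -> hcar -> complex R;
  hinnerDl : forall (a : complex R) (x y z : hcar),
      hinner (a *: x + y) z = a * hinner x z + hinner y z;
  hinnerC : forall x y : hcar, hinner y x = Num.conj (hinner x y);
  hinner_ge0 : forall x : hcar, 0 <= hinner x x;
  hinner_eq0 : forall x : hcar, hinner x x = 0 -> x = 0;
  hcomplete : forall u : nat -> hcar,
      (forall e : R, 0 < e -> exists N, forall m n, (N <= m)%N -> (N <= n)%N ->
          Num.sqrt (complex.Re (hinner (u m - u n) (u m - u n))) < e) ->
      exists l : hcar, forall e : R, 0 < e -> exists N, forall n, (N <= n)%N ->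
          Num.sqrt (complex.Re (hinner (u n - l) (u n - l))) < e
}.

Definition hnorm (R : realType) (H : Hilbert R) (x : H) : R :=
  Num.sqrt (complex.Re (hinner x x)).

(* Norm of the (orthogonal, Hilbert) direct sum H1 (+) H2, realized on pairs. *)
Definition snorm (R : realType) (H1 H2 : Hilbert R) (p : (H1 * H2)%type) : R :=
  Num.sqrt (hnorm p.1 ^+ 2 + hnorm p.2 ^+ 2).

Definition clinear (R : realType) (U V : lmodType (complex R)) (f : U -> V) :=
  forall (a : complex R) (x y : U), f (a *: x + y) = a *: f x + f y.

Definition bounded_linear (R : realType) (U V : lmodType (complex R))
    (nU : U -> R) (nV : V -> R) (f : U -> V) :=
  clinear f /\ exists M : R, forall x, nV (f x) <= M * nU x.

Definition opnorm (R : realType) (U V : Type) (nU : U -> R) (nV : V -> R)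
    (f : U -> V) : R :=
  sup [set nV (f x) | x in [set x | nU x <= 1]].

From mathcomp Require Import all_boot all_order all_algebra.
From mathcomp Require Import complex.
From mathcomp Require Import classical_sets reals.
From mathcomp Require Import lra.
Set Implicit Arguments. Unset Strict Implicit. Unset Printing Implicit Defensive.
Import Order.TTheory GRing.Theory Num.Theory.
Local Open Scope ring_scope.

(* Iterating the block form gives T^n = [[T1^n, S_n], [0, T2^n]], and the corner
   S_n is bounded by ||T^n|| since S_n y is the first component of T^n (0, y).
   If (u, v) = T^-n (x, y) then v = T2^-n y and u = T1^-n (x - S_n v), so
   ||u||^2 <= ||T1^-n||^2 (2 ||x||^2 + 2 ||T^n||^2 ||v||^2) by the parallelogram
   law; adding ||v||^2 <= ||T2^-n||^2 ||y||^2 gives the bound.  The same estimate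
   with n = 1 shows that the explicit block inverse of T is bounded. *)

Section RealSquares.
Context {R : realDomainType}.

Lemma ler_sqr_mul (u c v : R) : 0 <= u -> u <= c * v -> u ^+ 2 <= c ^+ 2 * v ^+ 2.
Proof. by move=> u0 le_u; rewrite -exprMn ler_pXn2r ?nnegrE // (le_trans u0). Qed.

Lemma ler_of_sqr (u c w : R) : 0 <= c -> 0 <= w ->
  u ^+ 2 <= c ^+ 2 * w ^+ 2 -> u <= c * w.
Proof.
move=> c0 w0 le_u2; have cw0 : 0 <= c * w by rewrite mulr_ge0.
have [u0|/ltW u0] := leP 0 u; last exact: le_trans u0 cw0.
by rewrite -ler_sqr ?nnegrE // exprMn.
Qed.

End RealSquares.

Section ComplexRe.
Context {R : rcfType}.
Local Open Scope complex_scope.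

Lemma ReD (a b : R[i]) : complex.Re (a + b) = complex.Re a + complex.Re b.
Proof. by case: a; case: b. Qed.

Lemma ReN (a : R[i]) : complex.Re (- a) = - complex.Re a.
Proof. by case: a. Qed.

Lemma Re_realM (r : R) (a : R[i]) : complex.Re (r%:C * a) = r * complex.Re a.
Proof. by case: a => a b /=; rewrite mul0r subr0. Qed.

Lemma Re_ge0 (z : R[i]) : 0 <= z -> 0 <= complex.Re z.
Proof. by rewrite lecE => /andP[]. Qed.

End ComplexRe.

Section InnerProduct.
Context {R : realType} {H : Hilbert R}.
Local Open Scope complex_scope.
Implicit Types (x y z : H).

Lemma hinner0l z : hinner 0 z = 0.
Proof.
have := hinnerDl 1 0 0 z; rewrite scaler0 addr0 mul1r => E.
by apply: (addrI (hinner 0 z)); rewrite addr0 -E.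
Qed.

Lemma hinnerZl a x z : hinner (a *: x) z = a * hinner x z.
Proof. by have := hinnerDl a x 0 z; rewrite addr0 hinner0l addr0. Qed.

Lemma hinner_addl x y z : hinner (x + y) z = hinner x z + hinner y z.
Proof. by have := hinnerDl 1 x y z; rewrite scale1r mul1r. Qed.

Lemma hinnerNl x z : hinner (- x) z = - hinner x z.
Proof. by rewrite -scaleN1r hinnerZl mulN1r. Qed.

Lemma hinner_addr x y z : hinner z (x + y) = hinner z x + hinner z y.
Proof.
by rewrite hinnerC hinner_addl rmorphD; congr (_ + _); apply/esym/hinnerC.
Qed.

Lemma hinnerNr x z : hinner z (- x) = - hinner z x.
Proof.
by rewrite hinnerC hinnerNl rmorphN; congr (- _); apply/esym/hinnerC.
Qed.

Lemma hinnerZr_real (r : R) x z : hinner z (r%:C *: x) = r%:C * hinner z x.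
Proof.
rewrite hinnerC hinnerZl rmorphM; congr (_ * _); last exact/esym/hinnerC.
by apply: conj_Creal; rewrite complex_real.
Qed.

Lemma hnorm_ge0 x : 0 <= hnorm x.
Proof. exact: sqrtr_ge0. Qed.

Lemma hnorm0 : hnorm (0 : H) = 0.
Proof. by rewrite /hnorm hinner0l sqrtr0. Qed.

Lemma hnorm_opp x : hnorm (- x) = hnorm x.
Proof. by rewrite /hnorm hinnerNl hinnerNr opprK. Qed.

Lemma hnormZ (r : R) x : 0 <= r -> hnorm (r%:C *: x) = r * hnorm x.
Proof.
move=> r0; rewrite /hnorm hinnerZl hinnerZr_real !Re_realM mulrA.
by rewrite sqrtrM ?mulr_ge0 // -expr2 sqrtr_sqr ger0_norm.
Qed.

Lemma hnorm_sqr x : hnorm x ^+ 2 = complex.Re (hinner x x).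
Proof. by rewrite sqr_sqrtr // Re_ge0 // hinner_ge0. Qed.

(* Parallelogram law, dropping the term [hnorm (x - y) ^+ 2 >= 0]. *)
Lemma hnormD_sqr_le x y :
  hnorm (x + y) ^+ 2 <= 2 * hnorm x ^+ 2 + 2 * hnorm y ^+ 2.
Proof.
have := Re_ge0 (hinner_ge0 (x - y)); rewrite !hnorm_sqr.
rewrite !(hinner_addl, hinner_addr, hinnerNl, hinnerNr, ReD, ReN); lra.
Qed.

End InnerProduct.

Lemma cancel_iter {T : Type} (f g : T -> T) n :
  cancel f g -> cancel (iter n f) (iter n g).
Proof. by move=> fK; elim: n => [//|n IH] x; rewrite iterSr /= fK IH. Qed.

Section ComplexLinear.
Context {R : realType} {U V : lmodType R[i]}.
Implicit Types (f : U -> V).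

Lemma clinear0 f : clinear f -> f 0 = 0.
Proof.
move=> lf; have := lf 1 0 0; rewrite scaler0 addr0 scale1r => E.
by apply: (addrI (f 0)); rewrite addr0 -E.
Qed.

Lemma clinearZ f a x : clinear f -> f (a *: x) = a *: f x.
Proof. by move=> lf; have := lf a x 0; rewrite !addr0 clinear0 // addr0. Qed.

Lemma clinearD f x y : clinear f -> f (x + y) = f x + f y.
Proof. by move=> lf; have := lf 1 x y; rewrite !scale1r. Qed.

Lemma clinear_can f (g : V -> U) : clinear f -> cancel f g -> cancel g f -> clinear g.
Proof.
by move=> lf fK gK a x y; rewrite -{1}(gK x) -{1}(gK y) -lf fK.
Qed.

End ComplexLinear.

Lemma clinear_iter {R : realType} {U : lmodType R[i]} (f : U -> U) n :
  clinear f -> clinear (iter n f).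
Proof. by move=> lf; elim: n => [//|n IH] a x y /=; rewrite IH lf. Qed.

Lemma bounded_linear_iter {R : realType} {U : lmodType R[i]} (nU : U -> R)
    (f : U -> U) n :
  (forall x, 0 <= nU x) -> bounded_linear nU nU f -> bounded_linear nU nU (iter n f).
Proof.
move=> nU0 [lf [M fM]]; split; first exact: clinear_iter.
have M0 : 0 <= Num.max M 0 by rewrite le_max lexx orbT.
have leM : M <= Num.max M 0 by rewrite le_max lexx.
exists (Num.max M 0 ^+ n); elim: n => [|n IH] x /=; first by rewrite mul1r.
rewrite exprS -mulrA; apply: le_trans (fM _) _.
apply: le_trans (ler_wpM2r (nU0 _) leM) _.
by rewrite ler_wpM2l.
Qed.

Definition nonneg_homogeneous {R : realType} {U : lmodType R[i]} (n : U -> R) :=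
  [/\ forall x, 0 <= n x, n 0 = 0 &
      forall (r : R) x, 0 < r -> n ((r%:C)%C *: x) = r * n x].

Section OperatorNorm.
Context {R : realType} {U V : lmodType R[i]} (nU : U -> R) (nV : V -> R).
Hypotheses (nU_hom : nonneg_homogeneous nU) (nV_hom : nonneg_homogeneous nV).
Local Open Scope classical_set_scope.
Local Open Scope complex_scope.
Implicit Types (f : U -> V).

Lemma opnorm_has_sup f :
  bounded_linear nU nV f -> has_sup [set nV (f x) | x in [set x | nU x <= 1]].
Proof.
case: nU_hom => nU0 nU_0 _ [_ [M fM]]; split.
  by exists (nV (f 0)), 0 => //=; rewrite nU_0.
exists (Num.max M 0) => _ [x /= x1 <-]; apply: le_trans (fM x) _.
have M0 : 0 <= Num.max M 0 by rewrite le_max lexx orbT.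
have leM : M <= Num.max M 0 by rewrite le_max lexx.
apply: le_trans (ler_wpM2r (nU0 x) leM) _.
by rewrite -{2}(mulr1 (Num.max M 0)) ler_wpM2l.
Qed.

(* Rescale [x] to the unit ball; the case [nU x = 0] uses the a priori bound. *)
Lemma norm_le_opnorm f :
  bounded_linear nU nV f -> forall x, nV (f x) <= opnorm nU nV f * nU x.
Proof.
move=> bf x; have hs := opnorm_has_sup bf.
case: nU_hom nV_hom bf => nU0 _ nUZ [_ _ nVZ] [lf [M fM]].
have [x0|] := eqVneq (nU x) 0.
  by have := fM x; rewrite x0 !mulr0.
move=> x_neq0; have xpos : 0 < nU x by rewrite lt0r x_neq0 nU0.
have unit_x : nV (f ((nU x)^-1%:C *: x)) <= opnorm nU nV f.
  apply: sup_upper_bound => //; exists ((nU x)^-1%:C *: x) => //=.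
  by rewrite nUZ ?invr_gt0 // mulVf // gt_eqF.
by rewrite -ler_pdivrMr // mulrC -nVZ ?invr_gt0 // -clinearZ.
Qed.

Lemma norm_le_max1_opnorm f : bounded_linear nU nV f ->
  forall x, nV (f x) <= Num.max 1 (opnorm nU nV f) * nU x.
Proof.
case: nU_hom => nU0 _ _ bf x; apply: le_trans (norm_le_opnorm bf x) _.
by rewrite ler_wpM2r // le_max lexx orbT.
Qed.

Lemma opnorm_le f c :
  0 <= c -> (forall x, nV (f x) <= c * nU x) -> opnorm nU nV f <= c.
Proof.
case: nU_hom => _ nU_0 _ c0 fc; apply: ge_sup.
  by exists (nV (f 0)), 0 => //=; rewrite nU_0.
move=> _ [x /= x1 <-]; apply: le_trans (fc x) _.
by rewrite -{2}(mulr1 c) ler_wpM2l.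
Qed.

End OperatorNorm.

Lemma hnorm_nonneg_homogeneous {R : realType} (H : Hilbert R) :
  nonneg_homogeneous (@hnorm R H).
Proof. by split=> [x||r x /ltW r0]; rewrite ?hnorm_ge0 ?hnorm0 ?hnormZ. Qed.

Section DirectSum.
Context {R : realType} {H1 H2 : Hilbert R}.
Local Notation H := (H1 * H2)%type.
Implicit Types (p : H) (x : H1) (y : H2).

Lemma snorm_ge0 p : 0 <= snorm p.
Proof. exact: sqrtr_ge0. Qed.

Lemma snorm_sqr p : snorm p ^+ 2 = hnorm p.1 ^+ 2 + hnorm p.2 ^+ 2.
Proof. by rewrite sqr_sqrtr // addr_ge0 // sqr_ge0. Qed.

Lemma snorm_nonneg_homogeneous : nonneg_homogeneous (@snorm R H1 H2).
Proof.
split=> [p||r [x y] r0]; first exact: snorm_ge0.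
  by rewrite /snorm /= !hnorm0 expr0n /= addr0 sqrtr0.
rewrite /snorm /= !hnormZ ?ltW // !exprMn -mulrDr sqrtrM ?sqr_ge0 //.
by rewrite sqrtr_sqr ger0_norm // ltW.
Qed.

Lemma snorm0l y : snorm ((0, y) : H) = hnorm y.
Proof.
by rewrite /snorm /= hnorm0 expr0n add0r sqrtr_sqr ger0_norm ?hnorm_ge0.
Qed.

Lemma hnorm_fst_le_snorm p : hnorm p.1 <= snorm p.
Proof.
rewrite -ler_sqr ?nnegrE ?hnorm_ge0 ?snorm_ge0 //.
by rewrite snorm_sqr lerDl sqr_ge0.
Qed.

Definition upper_triangular (A : H -> H) (A1 : H1 -> H1) (B : H2 -> H1)
    (A2 : H2 -> H2) :=
  forall x y, A (x, y) = (A1 x + B y, A2 y).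

Section UpperTriangular.
Variables (A : H -> H) (A1 : H1 -> H1) (B : H2 -> H1) (A2 : H2 -> H2).
Hypothesis A_tri : upper_triangular A A1 B A2.

Lemma upper_triangular_clinear : clinear A1 -> clinear B -> clinear A2 -> clinear A.
Proof.
move=> lA1 lB lA2 a [x y] [x' y'].
have -> : a *: (x, y) + (x', y') = (a *: x + x', a *: y + y') :> H by [].
rewrite !A_tri lA1 lB lA2.
have -> : a *: (A1 x + B y, A2 y) = (a *: (A1 x + B y), a *: A2 y) :> H by [].
by rewrite scalerDr addrACA.
Qed.

Lemma upper_triangular_iter n : clinear A1 ->
  exists Bn, upper_triangular (iter n A) (iter n A1) Bn (iter n A2).
Proof.
move=> lA1; elim: n => [|n [Bn An_tri]].
  by exists (fun=> 0) => x y; rewrite addr0.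
exists (fun y => A1 (Bn y) + B (iter n A2 y)) => x y /=.
by rewrite An_tri A_tri clinearD // addrA.
Qed.

Lemma upper_triangular_corner_le c : A1 0 = 0 ->
  (forall p, snorm (A p) <= c * snorm p) -> forall y, hnorm (B y) <= c * hnorm y.
Proof.
move=> A1_0 A_le y; rewrite -snorm0l; apply: le_trans (A_le (0, y)).
by rewrite A_tri A1_0 add0r (hnorm_fst_le_snorm (B y, A2 y)).
Qed.

Lemma snorm_upper_triangular_le t1 s t2 :
    (forall x, hnorm (A1 x) <= t1 * hnorm x) ->
    (forall y, hnorm (B y) <= s * hnorm y) ->
    (forall y, hnorm (A2 y) <= t2 * hnorm y) ->
  forall p, snorm (A p) <= Num.sqrt (2 * t1 ^+ 2 + 2 * s ^+ 2 + t2 ^+ 2) * snorm p.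
Proof.
move=> A1_le B_le A2_le [x y].
have K0 : 0 <= 2 * t1 ^+ 2 + 2 * s ^+ 2 + t2 ^+ 2.
  by have := sqr_ge0 t1; have := sqr_ge0 s; have := sqr_ge0 t2; lra.
apply: ler_of_sqr; [exact: sqrtr_ge0 | exact: snorm_ge0 |].
rewrite A_tri !snorm_sqr (sqr_sqrtr K0) /=.
have := ler_sqr_mul (hnorm_ge0 _) (A1_le x).
have := ler_sqr_mul (hnorm_ge0 _) (B_le y).
have := ler_sqr_mul (hnorm_ge0 _) (A2_le y).
have := hnormD_sqr_le (A1 x) (B y).
have : 0 <= t1 ^+ 2 * hnorm y ^+ 2 by rewrite mulr_ge0 ?sqr_ge0.
have : 0 <= s ^+ 2 * hnorm x ^+ 2 by rewrite mulr_ge0 ?sqr_ge0.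
have : 0 <= t2 ^+ 2 * hnorm x ^+ 2 by rewrite mulr_ge0 ?sqr_ge0.
lra.
Qed.

Lemma upper_triangular_bounded_linear :
    bounded_linear (@hnorm R H1) (@hnorm R H1) A1 ->
    bounded_linear (@hnorm R H2) (@hnorm R H1) B ->
    bounded_linear (@hnorm R H2) (@hnorm R H2) A2 ->
  bounded_linear (@snorm R H1 H2) (@snorm R H1 H2) A.
Proof.
move=> bA1 bB bA2; have hn1 := hnorm_nonneg_homogeneous H1.
have hn2 := hnorm_nonneg_homogeneous H2.
have A_le := snorm_upper_triangular_le (norm_le_opnorm hn1 hn1 bA1)
  (norm_le_opnorm hn2 hn1 bB) (norm_le_opnorm hn2 hn2 bA2).
split; first exact: upper_triangular_clinear bA1.1 bB.1 bA2.1.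
by eexists; exact: A_le.
Qed.

Lemma snorm_le_upper_triangular (A1inv : H1 -> H1) (A2inv : H2 -> H2) a b c :
    cancel A1 A1inv -> cancel A2 A2inv -> 1 <= a -> 1 <= b ->
    (forall x, hnorm (A1inv x) <= a * hnorm x) ->
    (forall y, hnorm (A2inv y) <= b * hnorm y) ->
    (forall y, hnorm (B y) <= c * hnorm y) ->
  forall p, snorm p <= a * b * Num.sqrt (Num.max 2 (2 * c ^+ 2 + 1)) * snorm (A p).
Proof.
move=> A1K A2K a1 b1 A1inv_le A2inv_le B_le [u v]; rewrite A_tri.
set x := A1 u + B v; set y := A2 v.
set K := Num.max 2 (2 * c ^+ 2 + 1).
have K2 : 2 <= K by rewrite le_max lexx.
have Kc : 2 * c ^+ 2 + 1 <= K by rewrite le_max lexx orbT.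
have a0 : 0 <= a by apply: le_trans a1.
have b0 : 0 <= b by apply: le_trans b1.
have K0 : 0 <= K by apply: le_trans K2.
apply: ler_of_sqr; [by rewrite !mulr_ge0 ?sqrtr_ge0 | exact: snorm_ge0 |].
rewrite !snorm_sqr !exprMn (sqr_sqrtr K0) /=.
have v_le : hnorm v ^+ 2 <= b ^+ 2 * hnorm y ^+ 2.
  by rewrite -{1}(A2K v); apply: ler_sqr_mul (hnorm_ge0 _) (A2inv_le _).
have u_le : hnorm u ^+ 2 <= a ^+ 2 * hnorm (x - B v) ^+ 2.
  rewrite -{1}(A1K u) -(addrK (B v) (A1 u)).
  exact: ler_sqr_mul (hnorm_ge0 _) (A1inv_le _).
have xBv_le :
    hnorm (x - B v) ^+ 2 <= 2 * hnorm x ^+ 2 + 2 * (c ^+ 2 * hnorm v ^+ 2).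
  have := ler_sqr_mul (hnorm_ge0 _) (B_le v).
  have := hnormD_sqr_le x (- B v); rewrite hnorm_opp; lra.
have [V0 X0 a2_0] : [/\ 0 <= hnorm v ^+ 2, 0 <= hnorm x ^+ 2 & 0 <= a ^+ 2].
  by rewrite !sqr_ge0.
have a2_1 : 1 <= a ^+ 2 by rewrite -(expr1n _ 2) ler_pXn2r ?nnegrE.
have b2_1 : 1 <= b ^+ 2 by rewrite -(expr1n _ 2) ler_pXn2r ?nnegrE.
have uv_le : hnorm u ^+ 2 + hnorm v ^+ 2 <=
    a ^+ 2 * (K * (hnorm x ^+ 2 + hnorm v ^+ 2)).
  have := ler_wpM2l a2_0 xBv_le; have := ler_wpM2r V0 a2_1.
  have := ler_wpM2l a2_0 (ler_wpM2r V0 Kc).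
  have := ler_wpM2l a2_0 (ler_wpM2r X0 K2).
  lra.
have xv_le :
    hnorm x ^+ 2 + hnorm v ^+ 2 <= b ^+ 2 * (hnorm x ^+ 2 + hnorm y ^+ 2).
  by have := ler_wpM2r X0 b2_1; lra.
apply: le_trans uv_le _.
have := ler_wpM2l a2_0 (ler_wpM2l K0 xv_le); lra.
Qed.

End UpperTriangular.
End DirectSum.

Unset Implicit Arguments.

Theorem lemma7p9 (R : realType) (H1 H2 : Hilbert R)
  (T1 T1inv : H1 -> H1) (T2 T2inv : H2 -> H2) (S : H2 -> H1)
  (T : (H1 * H2)%type -> (H1 * H2)%type) :
  bounded_linear (@hnorm R H1) (@hnorm R H1) T1 ->
  bounded_linear (@hnorm R H1) (@hnorm R H1) T1inv ->
  cancel T1 T1inv -> cancel T1inv T1 ->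
  bounded_linear (@hnorm R H2) (@hnorm R H2) T2 ->
  bounded_linear (@hnorm R H2) (@hnorm R H2) T2inv ->
  cancel T2 T2inv -> cancel T2inv T2 ->
  bounded_linear (@hnorm R H2) (@hnorm R H1) S ->
  (forall (x : H1) (y : H2), T (x, y) = (T1 x + S y, T2 y)) ->
  exists Tinv : (H1 * H2)%type -> (H1 * H2)%type,
    [/\ bounded_linear (@snorm R H1 H2) (@snorm R H1 H2) Tinv,
        cancel T Tinv, cancel Tinv T &
        forall n : nat,
          opnorm (@snorm R H1 H2) (@snorm R H1 H2) (iter n Tinv) <=
            Num.max 1 (opnorm (@hnorm R H1) (@hnorm R H1) (iter n T1inv)) *
            Num.max 1 (opnorm (@hnorm R H2) (@hnorm R H2) (iter n T2inv)) *
            Num.sqrt (Num.max 2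
              (2 * opnorm (@snorm R H1 H2) (@snorm R H1 H2) (iter n T) ^+ 2 + 1))].
Proof.
move=> bT1 bT1inv T1K T1invK bT2 bT2inv T2K T2invK bS T_tri.
have hn1 := hnorm_nonneg_homogeneous H1; have hn2 := hnorm_nonneg_homogeneous H2.
have sn := @snorm_nonneg_homogeneous R H1 H2.
have max1_ge1 (r : R) : 1 <= Num.max 1 r by rewrite le_max lexx.
pose Tinv p := (T1inv (p.1 - S (T2inv p.2)), T2inv p.2).
have TK : cancel T Tinv by move=> [x y]; rewrite T_tri /Tinv /= T2K addrK T1K.
have TinvK : cancel Tinv T by move=> [x y]; rewrite /Tinv T_tri /= T2invK T1invK subrK.
have bT := upper_triangular_bounded_linear T_tri bT1 bS bT2.
exists Tinv; split=> // [|n].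
  have Tinv_le := snorm_le_upper_triangular T_tri T1K T2K (max1_ge1 _) (max1_ge1 _)
    (norm_le_max1_opnorm hn1 hn1 bT1inv) (norm_le_max1_opnorm hn2 hn2 bT2inv)
    (norm_le_opnorm hn2 hn1 bS).
  split; first exact: clinear_can bT.1 TK TinvK.
  by eexists => q; rewrite -{2}(TinvK q); exact: Tinv_le.
have [Bn Tn_tri] := upper_triangular_iter T_tri n bT1.1.
have Bn_le := upper_triangular_corner_le Tn_tri (clinear0 (clinear_iter n bT1.1))
  (norm_le_opnorm sn sn (bounded_linear_iter n (@snorm_ge0 _ H1 H2) bT)).
have Tinvn_le := snorm_le_upper_triangular Tn_tri
  (cancel_iter n T1K) (cancel_iter n T2K) (max1_ge1 _) (max1_ge1 _)
  (norm_le_max1_opnorm hn1 hn1 (bounded_linear_iter n (@hnorm_ge0 _ H1) bT1inv))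
  (norm_le_max1_opnorm hn2 hn2 (bounded_linear_iter n (@hnorm_ge0 _ H2) bT2inv)) Bn_le.
apply: opnorm_le => // [|q]; first by rewrite !mulr_ge0 ?sqrtr_ge0 ?(le_trans ler01).
by rewrite -{2}(cancel_iter n TinvK q); exact: Tinvn_le.
Qed.
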